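(* The mould $\mathsf{dupal}$, defined by $\mathsf{dupal}^0=0$ and, for $m\ge1$, \[ \mathsf{dupal}^m(x_1,\dots,x_m)=\frac{B_m}{m!}\frac{1}{x_1\cdots x_m}\sum_{k=0}^{m-1}(-1)^k\binom{m-1}{k}x_{k+1}, \] is alternal.
   Context: $B_m$ are the Bernoulli numbers, $\frac{x}{e^x-1}=\sum_{m\ge0}\frac{B_m}{m!}x^m$. A mould is a family $A=(A^m(x_1,\dots,x_m))_{m\ge0}$ with $A^m\in\mathbb{Q}((x_1,\dots,x_m))$, extended linearly to formal linear combinations of words. Shuffle product: $\emptyset\,\text{ш}\,\omega=\omega\,\text{ш}\,\emptyset=\omega$, $a\omega\,\text{ш}\,b\eta=a(\omega\,\text{ш}\,b\eta)+b(a\omega\,\text{ш}\,\eta)$. A mould $A$ with $A^0=0$ is alternal if $A^{p+q}\bigl((x_1,\dots,x_p)\,\text{ш}\,(x_{p+1},\dots,x_{p+q})\bigr)=0$ for all $p,q\ge1$. *)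

From HB Require Import structures.
From mathcomp Require Import all_boot all_order all_algebra.
From mathcomp Require Import fraction.
From mathcomp Require Import mpoly.
Set Implicit Arguments. Unset Strict Implicit. Unset Printing Implicit Defensive.
Import Order.TTheory GRing.Theory Num.Theory.
Local Open Scope ring_scope.

(* Bernoulli numbers B_0, ..., B_n (convention x/(e^x-1), so B_1 = -1/2),
   computed by the recurrence  sum_{k=0}^{m} C(m+1,k) B_k = 0  (m >= 1),
   which is equivalent to x = (e^x - 1) * sum_m B_m x^m/m!. *)
Fixpoint bern_seq (n : nat) : seq rat :=
  match n with
  | 0 => [:: 1]
  | n'.+1 =>
      let s := bern_seq n' in
      rcons s (- (n'.+2%:R)^-1 * \sum_(k < n'.+1) ('C(n'.+2, k))%:R * s`_k)
  end.

Definition bernoulli (m : nat) : rat := (bern_seq m)`_m.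

(* Shuffle product of two words, as the list (with multiplicity) of all
   words appearing in  s ш t. *)
Fixpoint shuffle {T : Type} (s t : seq T) : seq (seq T) :=
  match s with
  | [::] => [:: t]
  | a :: s' =>
      let fix aux (t : seq T) : seq (seq T) :=
        match t with
        | [::] => [:: s]
        | b :: t' => map (cons a) (shuffle s' t) ++ map (cons b) (aux t')
        end
      in aux t
  end.

Definition dupal {F : fieldType} (y : seq F) : F :=
  let m := size y in
  if m is 0 then 0 else
  ratr (bernoulli m / (m`!)%:R) * (\prod_(a <- y) a)^-1 *
    \sum_(k < m) (-1) ^+ k * ('C(m.-1, k))%:R * y`_k.

Definition ratfun (n : nat) := {fraction {mpoly rat[n]}}.
Definition xvar (n : nat) (i : 'I_n) : ratfun n := tofrac ('X_i : {mpoly rat[n]}).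

(* Alternality of a mould A given by its value on words (A w = A^{|w|}(w)):
   A^0 = 0 and A^{p+q}((x_1..x_p) ш (x_{p+1}..x_{p+q})) = 0 in Q(x_1..x_{p+q}). *)
Definition alternal (A : forall n, seq (ratfun n) -> ratfun n) : Prop :=
  A 0 [::] = 0 /\
  forall p q : nat, (0 < p)%N -> (0 < q)%N ->
    \sum_(w <- shuffle [seq xvar (lshift q i) | i : 'I_p]
                       [seq xvar (rshift p j) | j : 'I_q])
       A (p + q)%N w = 0.

From HB Require Import structures.
From mathcomp Require Import all_boot all_order all_algebra.
From mathcomp Require Import fraction.
From mathcomp Require Import mpoly.
From mathcomp Require Import zify.
Set Implicit Arguments. Unset Strict Implicit. Unset Printing Implicit Defensive.
Import Order.TTheory GRing.Theory Num.Theory.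
Local Open Scope ring_scope.

(* dupal^m(w) factors as c * L(w), where c = B_m/m! / (w_1 ... w_m) is
   symmetric in the letters, hence constant on u ш v, and
   L(w) = sum_k (-1)^k C(m-1,k) w_(k+1).  Pascal's rule gives
   L(w) = L(w without its last letter) - L(w without its first letter).
   Summing over u ш v, the first letter of a shuffle comes from u or from v,
   and so does the last one; by induction on |u| + |v| both partial sums equal
   the same boundary terms, so L sums to 0 over u ш v when u, v are nonempty. *)

Section ShuffleSums.
Variables (T : Type) (R : nmodType).

Lemma shuffle0s (t : seq T) : shuffle [::] t = [:: t].
Proof. by []. Qed.

Lemma shuffles0 (s : seq T) : shuffle s [::] = [:: s].
Proof. by case: s. Qed.

Lemma big_shuffle_cons (F : seq T -> R) a b s t :
  \sum_(w <- shuffle (a :: s) (b :: t)) F w =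
  \sum_(w <- shuffle s (b :: t)) F (a :: w) +
  \sum_(w <- shuffle (a :: s) t) F (b :: w).
Proof. by rewrite /= big_cat !big_map. Qed.

Lemma big_shuffle_rcons (F : seq T -> R) a b s t :
  \sum_(w <- shuffle (rcons s a) (rcons t b)) F w =
  \sum_(w <- shuffle s (rcons t b)) F (rcons w a) +
  \sum_(w <- shuffle (rcons s a) t) F (rcons w b).
Proof.
have rcons0 (c : T) : rcons [::] c = [:: c] by [].
elim: s t F => [|x s IHs] t F.
  elim: t F => [|y t IHt] F; first by rewrite /= !big_cons !big_nil /= !addr0 addrC.
  rewrite rcons0 rcons_cons big_shuffle_cons -rcons0 IHt.
  rewrite !shuffle0s !big_seq1 rcons0 (big_shuffle_cons (F \o rcons^~ b)).
  by rewrite shuffle0s big_seq1 !rcons_cons -rcons0 addrCA.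
elim: t F => [|y t IHt] F.
  rewrite rcons_cons rcons0 big_shuffle_cons -rcons0 IHs shuffles0 big_cons big_nil.
  by rewrite !big_seq1 /= big_cat !big_map big_seq1 addrAC addr0.
rewrite !rcons_cons big_shuffle_cons -!rcons_cons IHs IHt.
rewrite (big_shuffle_cons (F \o rcons^~ a)) (big_shuffle_cons (F \o rcons^~ b)).
by rewrite -!addrA; congr (_ + _); rewrite addrCA.
Qed.

End ShuffleSums.

Lemma perm_shuffle (T : eqType) (s t w : seq T) :
  w \in shuffle s t -> perm_eq w (s ++ t).
Proof.
elim: s t w => [|a s IHs] t w; first by rewrite shuffle0s inE => /eqP ->.
elim: t w => [|b t IHt] w; first by rewrite shuffles0 inE cats0 => /eqP ->.
rewrite mem_cat => /orP[] /mapP[w' w'_in ->]; first by rewrite perm_cons IHs.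
by rewrite perm_sym -[b :: t]cat1s perm_catCA perm_cons perm_sym IHt.
Qed.

Lemma take_rcons (T : Type) (s : seq T) a : take (size s) (rcons s a) = s.
Proof. by rewrite -cats1 take_size_cat. Qed.

Definition dupal_lin (R : pzRingType) (w : seq R) : R :=
  \sum_(k < size w) (-1) ^+ k * ('C((size w).-1, k))%:R * w`_k.

Lemma dupal_lin_nil (R : pzRingType) : dupal_lin ([::] : seq R) = 0.
Proof. exact: big_ord0. Qed.

Lemma dupal_lin_cons_rcons (R : pzRingType) (x a : R) s :
  dupal_lin (x :: rcons s a) = dupal_lin (x :: s) - dupal_lin (rcons s a).
Proof.
rewrite /dupal_lin /= !size_rcons /=.
rewrite [LHS]big_ord_recl [X in _ = X - _]big_ord_recl /= !expr0 !bin0 !mul1r.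
rewrite -addrA; congr (_ + _).
under eq_bigr => i _ do rewrite /bump /= add1n binS natrD mulrDr mulrDl.
rewrite big_split /= big_ord_recr /= bin_small // mulr0n mulr0 mul0r addr0.
rewrite -sumrN; congr (_ + _); apply: eq_bigr => i _.
  by rewrite /bump /= add1n nth_rcons ltn_ord.
by rewrite exprS mulN1r !mulNr.
Qed.

Lemma dupal_lin_pascal (R : pzRingType) (w : seq R) : (1 < size w)%N ->
  dupal_lin w = dupal_lin (take (size w).-1 w) - dupal_lin (behead w).
Proof.
case: w => [|x w] //; case/lastP: w => [|s a] // _.
have -> : take (size (x :: rcons s a)).-1 (x :: rcons s a) = x :: s.
  by rewrite -rcons_cons size_rcons take_rcons.
exact: dupal_lin_cons_rcons.
Qed.

Lemma sum_shuffle_dupal_lin (R : pzRingType) (u v : seq R) :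
  \sum_(w <- shuffle u v) dupal_lin w =
  (if nilp u then dupal_lin v else 0) + (if nilp v then dupal_lin u else 0).
Proof.
have [n] := ubnP (size u + size v); elim: n u v => // n IH u v lt_uv_n.
have [/size0nil->|u_gt0] := posnP (size u).
  by rewrite shuffle0s big_seq1 dupal_lin_nil if_same addr0.
have [/size0nil->|v_gt0] := posnP (size v).
  by rewrite shuffles0 big_seq1 dupal_lin_nil if_same add0r.
rewrite /nilp !gtn_eqF // addr0.
have -> : \sum_(w <- shuffle u v) dupal_lin w =
    \sum_(w <- shuffle u v) dupal_lin (take (size w).-1 w) -
    \sum_(w <- shuffle u v) dupal_lin (behead w).
  rewrite -sumrB; apply: eq_big_seq => w /perm_shuffle/perm_size size_w.
  by rewrite dupal_lin_pascal // size_w size_cat (leq_add u_gt0 v_gt0).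
apply/eqP; rewrite subr_eq0; apply/eqP.
transitivity ((if size u == 1%N then dupal_lin v else 0) +
              (if size v == 1%N then dupal_lin u else 0)).
- case/lastP: u u_gt0 lt_uv_n => // u' a _; case/lastP: v v_gt0 => // v' b _.
  rewrite !size_rcons => lt_uv_n.
  rewrite big_shuffle_rcons.
  under eq_bigr => w _ do rewrite size_rcons take_rcons.
  under [X in _ + X]eq_bigr => w _ do rewrite size_rcons take_rcons.
  rewrite !IH ?size_rcons /=; try lia.
  by rewrite /nilp !size_rcons addr0 add0r.
- case: u u_gt0 lt_uv_n => // a u' _; case: v v_gt0 => // b v' _ /= lt_uv_n.
  rewrite big_shuffle_cons !IH /=; try lia.
  by rewrite addr0 add0r.
Qed.

Lemma dupalE (F : fieldType) (w : seq F) : w != [::] ->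
  dupal w = ratr (bernoulli (size w) / (size w)`!%:R) *
            (\prod_(a <- w) a)^-1 * dupal_lin w.
Proof. by case: w. Qed.

Theorem proposition1p30 : alternal (fun n (w : seq (ratfun n)) => dupal w).
Proof.
split=> // p q p_gt0 q_gt0.
set u := [seq _ | i : 'I_p]; set v := [seq _ | j : 'I_q].
have size_u : size u = p by rewrite size_map size_enum_ord.
have size_v : size v = q by rewrite size_map size_enum_ord.
pose c := ratr (bernoulli (p + q) / (p + q)`!%:R) * (\prod_(a <- u ++ v) a)^-1.
rewrite (eq_big_seq (fun w => c * dupal_lin w)) => [|w /perm_shuffle uv_w].
  by rewrite -mulr_sumr sum_shuffle_dupal_lin /nilp size_u size_v !gtn_eqF // addr0 mulr0.
have size_w : size w = (p + q)%N by rewrite (perm_size uv_w) size_cat size_u size_v.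
by rewrite dupalE -?size_eq0 size_w ?addn_eq0 ?gtn_eqF // (perm_big _ uv_w).
Qed.
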